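(* Let $R\subseteq\{e,c,w\}$ and let $\{s_1,\ldots,s_n\}\cup\{x\Rightarrow\delta\}$ ($n\ge 1$) be a finite set of sequents. Then $\{s_1,\ldots,s_n\}\vdash_{\mathbf{NACCLL}^-_R}x\Rightarrow\delta\iff\ \vdash_{\mathbf{NACCLL}^-_R}x\circ(\tau(s_1)\circ(\tau(s_2)\circ\cdots(\tau(s_{n-1})\circ\tau(s_n))\cdots))\Rightarrow\delta$, and the same equivalence holds with $\mathbf{NACCLL}_R$ in place of $\mathbf{NACCLL}^-_R$.
   Context: Formulas: terms over a countably infinite set of variables in $\{\wedge,\vee,\cdot,\backslash,/,!,1,0\}$. Structures: elements of the free unital groupoid $(Fm^\circ,\circ,\varepsilon)$ generated by formulas ($\circ$ non-associative, $\varepsilon$ empty structure and unit). $k$ ranges over structures in the free unital groupoid generated by formulas $!a$ (including $\varepsilon$). A context $u$ is a structure with exactly one hole; $u(x)$ fills it. A sequent is $x\Rightarrow\delta$, $\delta$ a formula or the empty stoup $\epsilon$. For a structure $x$, $\rho(x)$ is the formula obtained by replacing each $\circ$ by $\cdot$ ($\rho(\varepsilon)=1$); $\theta(\epsilon)=0$ and $\theta(a)=a$ for formulas $a$; for $s=(x\Rightarrow\delta)$, $\tau(s)=!(\rho(x)\backslash\theta(\delta))$. $\mathbf{NACILL}^0$: initial sequents $a\Rightarrow a$, $\varepsilon\Rightarrow 1$, $0\Rightarrow\epsilon$; rules (premises / conclusion): (cut) $x\Rightarrow a$, $u(a)\Rightarrow\delta$ / $u(x)\Rightarrow\delta$; $(1\Rightarrow)$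 $u(\varepsilon)\Rightarrow\delta$ / $u(1)\Rightarrow\delta$; $(\Rightarrow 0)$ $x\Rightarrow\epsilon$ / $x\Rightarrow 0$; $(\backslash\Rightarrow)$ $x\Rightarrow a$, $u(b)\Rightarrow\delta$ / $u(x\circ(a\backslash b))\Rightarrow\delta$; $(\Rightarrow\backslash)$ $a\circ x\Rightarrow b$ / $x\Rightarrow a\backslash b$; $(/\Rightarrow)$ $x\Rightarrow a$, $u(b)\Rightarrow\delta$ / $u((b/a)\circ x)\Rightarrow\delta$; $(\Rightarrow/)$ $x\circ a\Rightarrow b$ / $x\Rightarrow b/a$; $(\cdot\Rightarrow)$ $u(a\circ b)\Rightarrow\delta$ / $u(a\cdot b)\Rightarrow\delta$; $(\Rightarrow\cdot)$ $x\Rightarrow a$, $y\Rightarrow b$ / $x\circ y\Rightarrow a\cdot b$; $(\wedge\Rightarrow)$ $u(a_i)\Rightarrow\delta$ / $u(a_1\wedge a_2)\Rightarrow\delta$; $(\Rightarrow\wedge)$ $x\Rightarrow a$, $x\Rightarrow b$ / $x\Rightarrow a\wedge b$; $(\vee\Rightarrow)$ $u(a)\Rightarrow\delta$, $u(b)\Rightarrow\delta$ / $u(a\vee b)\Rightarrow\delta$; $(\Rightarrow\vee)$ $x\Rightarrow a_i$ / $x\Rightarrow a_1\vee a_2$; $(!\Rightarrow)$ $u(a)\Rightarrow\delta$ / $u(!a)\Rightarrow\delta$; $(\Rightarrow!)$ $k\Rightarrow a$ / $k\Rightarrow !a$; $(kw)$ $u(\varepsilon)\Rightarrow\delta$ /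 $u(k)\Rightarrow\delta$; $(kc)$ $u(k\circ k)\Rightarrow\delta$ / $u(k)\Rightarrow\delta$; two-directional: $(ke)$ $u(k\circ y)\Rightarrow\delta\leftrightarrow u(y\circ k)\Rightarrow\delta$; $(ka1)$ $u((k\circ y)\circ z)\Rightarrow\delta\leftrightarrow u(k\circ(y\circ z))\Rightarrow\delta$; $(ka2)$ $u((x\circ y)\circ k)\Rightarrow\delta\leftrightarrow u(x\circ(y\circ k))\Rightarrow\delta$. $\mathbf{NACCLL}^-$: $\mathbf{NACILL}^0$ plus initial sequents ${\sim}(-a)\Rightarrow a$, $-({\sim}a)\Rightarrow a$, $({\sim}a)/b\Rightarrow a\backslash(-b)$, $a\backslash(-b)\Rightarrow({\sim}a)/b$, where ${\sim}a:=a\backslash 0$, $-a:=0/a$. $\mathbf{NACCLL}$: additionally ${\sim}a\Rightarrow -a$ and $-a\Rightarrow{\sim}a$. Structural rules: $(e)$ $u(x\circ y)\Rightarrow\delta$ / $u(y\circ x)\Rightarrow\delta$; $(c)$ $u(x\circ x)\Rightarrow\delta$ / $u(x)\Rightarrow\delta$; $(i)$ $u(\varepsilon)\Rightarrow\delta$ / $u(x)\Rightarrow\delta$; $(o)$ $x\Rightarrow\epsilon$ / $x\Rightarrow a$; $(w)$ means both $(i)$ and $(o)$. Subscript $R$ adds the rules in $R$. $\mathcal S\vdash s$: there is a derivation of $s$ whose leaves are initial sequents or members of $\mathcal S$; $\vdash s$ means $\emptyset\vdash s$. *)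

From Stdlib Require Import List.
Import ListNotations.

Inductive formula : Type :=
| Var  : nat -> formula
| Meet : formula -> formula -> formula
| Join : formula -> formula -> formula
| Prod : formula -> formula -> formula
| LDiv : formula -> formula -> formula      (* LDiv a b = a \ b *)
| RDiv : formula -> formula -> formula      (* RDiv b a = b / a *)
| Bang : formula -> formula
| One  : formula
| Zero : formula.

(** Free unital groupoid generated by formulas, in normal form:
    a structure is either the empty structure eps (None) or a
    non-empty binary tree of formulas (Some t).  Composition absorbs eps. *)
Inductive nstr : Type :=
| Leaf : formula -> nstr
| Node : nstr -> nstr -> nstr.

Definition str := option nstr.
Definition eps : str := None.
Definition fm (a : formula) : str := Some (Leaf a).

Definition scomp (x y : str) : str :=
  match x, y with
  | None, _ => y
  | _, None => x
  | Some s, Some t => Some (Node s t)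
  end.

Inductive ctx : Type :=
| Hole : ctx
| CL : ctx -> nstr -> ctx
| CR : nstr -> ctx -> ctx.

Fixpoint fill (u : ctx) (x : str) : str :=
  match u with
  | Hole => x
  | CL u' y => scomp (fill u' x) (Some y)
  | CR y u' => scomp (Some y) (fill u' x)
  end.

Fixpoint nbang (t : nstr) : Prop :=
  match t with
  | Leaf a => exists b, a = Bang b
  | Node l r => nbang l /\ nbang r
  end.

Definition is_k (x : str) : Prop :=
  match x with None => True | Some t => nbang t end.

(** Sequents x => delta; delta = None is the empty stoup. *)
Definition sequent : Type := (str * option formula)%type.

Fixpoint nrho (t : nstr) : formula :=
  match t with
  | Leaf a => a
  | Node l r => Prod (nrho l) (nrho r)
  end.

Definition rho (x : str) : formula :=
  match x with None => One | Some t => nrho t end.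

Definition theta (d : option formula) : formula :=
  match d with None => Zero | Some a => a end.

Definition tau (s : sequent) : formula := Bang (LDiv (rho (fst s)) (theta (snd s))).

Definition tau_fold (ss : list sequent) : str :=
  fold_right (fun s acc => scomp (fm (tau s)) acc) eps ss.

Definition neg_r (a : formula) : formula := LDiv a Zero.
Definition neg_l (a : formula) : formula := RDiv Zero a.

(** Structural rules that may be added: e, c, w (w = i and o). *)
Inductive srule : Type := Re | Rc | Rw.

Inductive system : Type := NACCLLminus | NACCLLfull.

Inductive initial : system -> sequent -> Prop :=
| in_id   : forall L a, initial L (fm a, Some a)
| in_one  : forall L, initial L (eps, Some One)
| in_zero : forall L, initial L (fm Zero, None)
| in_dn1  : forall L a, initial L (fm (neg_r (neg_l a)), Some a)
| in_dn2  : forall L a, initial L (fm (neg_l (neg_r a)), Some a)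
| in_ct1  : forall L a b, initial L (fm (RDiv (neg_r a) b), Some (LDiv a (neg_l b)))
| in_ct2  : forall L a b, initial L (fm (LDiv a (neg_l b)), Some (RDiv (neg_r a) b))
| in_cy1  : forall a, initial NACCLLfull (fm (neg_r a), Some (neg_l a))
| in_cy2  : forall a, initial NACCLLfull (fm (neg_l a), Some (neg_r a)).

Inductive prov (L : system) (R : srule -> bool) (S : sequent -> Prop)
  : sequent -> Prop :=
| p_hyp : forall s, S s -> prov L R S s
| p_init : forall s, initial L s -> prov L R S s
| p_cut : forall x a u d,
    prov L R S (x, Some a) -> prov L R S (fill u (fm a), d) ->
    prov L R S (fill u x, d)
| p_oneL : forall u d, prov L R S (fill u eps, d) -> prov L R S (fill u (fm One), d)
| p_zeroR : forall x, prov L R S (x, None) -> prov L R S (x, Some Zero)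
| p_ldivL : forall x a b u d,
    prov L R S (x, Some a) -> prov L R S (fill u (fm b), d) ->
    prov L R S (fill u (scomp x (fm (LDiv a b))), d)
| p_ldivR : forall a x b,
    prov L R S (scomp (fm a) x, Some b) -> prov L R S (x, Some (LDiv a b))
| p_rdivL : forall x a b u d,
    prov L R S (x, Some a) -> prov L R S (fill u (fm b), d) ->
    prov L R S (fill u (scomp (fm (RDiv b a)) x), d)
| p_rdivR : forall x a b,
    prov L R S (scomp x (fm a), Some b) -> prov L R S (x, Some (RDiv b a))
| p_prodL : forall u a b d,
    prov L R S (fill u (scomp (fm a) (fm b)), d) -> prov L R S (fill u (fm (Prod a b)), d)
| p_prodR : forall x y a b,
    prov L R S (x, Some a) -> prov L R S (y, Some b) ->
    prov L R S (scomp x y, Some (Prod a b))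
| p_meetL1 : forall u a1 a2 d,
    prov L R S (fill u (fm a1), d) -> prov L R S (fill u (fm (Meet a1 a2)), d)
| p_meetL2 : forall u a1 a2 d,
    prov L R S (fill u (fm a2), d) -> prov L R S (fill u (fm (Meet a1 a2)), d)
| p_meetR : forall x a b,
    prov L R S (x, Some a) -> prov L R S (x, Some b) -> prov L R S (x, Some (Meet a b))
| p_joinL : forall u a b d,
    prov L R S (fill u (fm a), d) -> prov L R S (fill u (fm b), d) ->
    prov L R S (fill u (fm (Join a b)), d)
| p_joinR1 : forall x a1 a2,
    prov L R S (x, Some a1) -> prov L R S (x, Some (Join a1 a2))
| p_joinR2 : forall x a1 a2,
    prov L R S (x, Some a2) -> prov L R S (x, Some (Join a1 a2))
| p_bangL : forall u a d,
    prov L R S (fill u (fm a), d) -> prov L R S (fill u (fm (Bang a)), d)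
| p_bangR : forall k a,
    is_k k -> prov L R S (k, Some a) -> prov L R S (k, Some (Bang a))
| p_kw : forall u k d,
    is_k k -> prov L R S (fill u eps, d) -> prov L R S (fill u k, d)
| p_kc : forall u k d,
    is_k k -> prov L R S (fill u (scomp k k), d) -> prov L R S (fill u k, d)
| p_ke1 : forall u k y d,
    is_k k -> prov L R S (fill u (scomp k y), d) -> prov L R S (fill u (scomp y k), d)
| p_ke2 : forall u k y d,
    is_k k -> prov L R S (fill u (scomp y k), d) -> prov L R S (fill u (scomp k y), d)
| p_ka1a : forall u k y z d,
    is_k k -> prov L R S (fill u (scomp (scomp k y) z), d) ->
    prov L R S (fill u (scomp k (scomp y z)), d)
| p_ka1b : forall u k y z d,
    is_k k -> prov L R S (fill u (scomp k (scomp y z)), d) ->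
    prov L R S (fill u (scomp (scomp k y) z), d)
| p_ka2a : forall u x y k d,
    is_k k -> prov L R S (fill u (scomp (scomp x y) k), d) ->
    prov L R S (fill u (scomp x (scomp y k)), d)
| p_ka2b : forall u x y k d,
    is_k k -> prov L R S (fill u (scomp x (scomp y k)), d) ->
    prov L R S (fill u (scomp (scomp x y) k), d)
| p_e : forall u x y d,
    R Re = true -> prov L R S (fill u (scomp x y), d) -> prov L R S (fill u (scomp y x), d)
| p_c : forall u x d,
    R Rc = true -> prov L R S (fill u (scomp x x), d) -> prov L R S (fill u x, d)
| p_i : forall u x d,
    R Rw = true -> prov L R S (fill u eps, d) -> prov L R S (fill u x, d)
| p_o : forall x a,
    R Rw = true -> prov L R S (x, None) -> prov L R S (x, Some a).

From Stdlib Require Import List.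

(* Every tau s is a formula !a, so the structure T := tau_fold ss may be
   weakened, contracted, exchanged and reassociated freely.  Appending T on the
   right of every sequent of a derivation from the hypotheses ss therefore yields
   a derivation without hypotheses: rules with two premises contract the two
   copies of T, rules acting inside a context pull T out of it, and a hypothesis
   leaf y => d becomes y o tau(y => d) => d, which follows from (\ =>) after
   discarding the other members of T.  Conversely, each tau s is provable from s
   by (=> \) and (=> !), so cutting them against x o T => d gives back x => d. *)

Fixpoint ctx_comp (u v : ctx) : ctx :=
  match u with
  | Hole => v
  | CL u' y => CL (ctx_comp u' v) y
  | CR y u' => CR y (ctx_comp u' v)
  end.

Lemma fill_comp u v z : fill (ctx_comp u v) z = fill u (fill v z).
Proof. induction u; simpl; try rewrite IHu; reflexivity. Qed.

Definition ctx_right_of (x : str) : ctx :=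
  match x with None => Hole | Some t => CR t Hole end.
Definition ctx_left_of (x : str) : ctx :=
  match x with None => Hole | Some t => CL Hole t end.

Lemma scomp_eps_r x : scomp x eps = x.
Proof. destruct x; reflexivity. Qed.

Lemma fill_ctx_right_of x z : fill (ctx_right_of x) z = scomp x z.
Proof. destruct x; reflexivity. Qed.

Lemma fill_ctx_left_of x z : fill (ctx_left_of x) z = scomp z x.
Proof. destruct x; simpl; [reflexivity | symmetry; apply scomp_eps_r]. Qed.

Lemma scomp_fill_l k u z : scomp (fill u z) k = fill (ctx_comp (ctx_left_of k) u) z.
Proof. rewrite fill_comp, fill_ctx_left_of. reflexivity. Qed.

Lemma fill_scomp_around x y z :
  fill (ctx_comp (ctx_right_of x) (ctx_left_of y)) z = scomp x (scomp z y).
Proof. rewrite fill_comp, fill_ctx_right_of, fill_ctx_left_of. reflexivity. Qed.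

Lemma is_k_scomp x y : is_k x -> is_k y -> is_k (scomp x y).
Proof. destruct x, y; simpl; tauto. Qed.

Lemma is_k_tau s : is_k (fm (tau s)).
Proof. eexists; reflexivity. Qed.

Lemma is_k_tau_fold ss : is_k (tau_fold ss).
Proof.
  induction ss as [|s ss IH]; [exact I |].
  apply is_k_scomp; [apply is_k_tau | exact IH].
Qed.

Section Deduction.

Variables (L : system) (R : srule -> bool).

Lemma prov_mono (S S' : sequent -> Prop) s :
  (forall s', S s' -> S' s') -> prov L R S s -> prov L R S' s.
Proof.
  intros HSS' H. induction H;
  [ apply p_hyp, HSS' | eapply p_init | eapply p_cut | eapply p_oneL | eapply p_zeroR
  | eapply p_ldivL | eapply p_ldivR | eapply p_rdivL | eapply p_rdivR | eapply p_prodL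
  | eapply p_prodR | eapply p_meetL1 | eapply p_meetL2 | eapply p_meetR | eapply p_joinL
  | eapply p_joinR1 | eapply p_joinR2 | eapply p_bangL | eapply p_bangR | eapply p_kw
  | eapply p_kc | eapply p_ke1 | eapply p_ke2 | eapply p_ka1a | eapply p_ka1b
  | eapply p_ka2a | eapply p_ka2b | eapply p_e | eapply p_c | eapply p_i | eapply p_o ];
  eauto.
Qed.

Variable S : sequent -> Prop.

Lemma prov_rho_r y : prov L R S (y, Some (rho y)).
Proof.
  destruct y as [t|]; [| apply p_init, in_one].
  induction t as [a | t1 IH1 t2 IH2].
  - apply p_init, in_id.
  - exact (p_prodR _ _ _ (Some t1) (Some t2) _ _ IH1 IH2).
Qed.

Lemma prov_rho_l y u d : prov L R S (fill u y, d) -> prov L R S (fill u (fm (rho y)), d).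
Proof.
  destruct y as [t|]; [| apply p_oneL].
  revert u. induction t as [a | t1 IH1 t2 IH2]; intros u H; [exact H |].
  apply p_prodL.
  specialize (IH1 (ctx_comp u (ctx_left_of (fm (nrho t2))))).
  rewrite !fill_comp, !fill_ctx_left_of in IH1. apply IH1.
  specialize (IH2 (ctx_comp u (ctx_right_of (Some t1)))).
  rewrite !fill_comp, !fill_ctx_right_of in IH2. apply IH2, H.
Qed.

Lemma prov_tau y d : prov L R S (y, d) -> prov L R S (eps, Some (tau (y, d))).
Proof.
  intro H. apply p_bangR; [exact I |]. apply p_ldivR.
  apply (prov_rho_l y Hole).
  destruct d; [exact H | apply p_zeroR, H].
Qed.

Lemma prov_tau_discharge y d : prov L R S (scomp y (fm (tau (y, d))), d).
Proof.
  rewrite <- fill_ctx_right_of. apply p_bangL. rewrite fill_ctx_right_of.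
  apply (p_ldivL _ _ _ y (rho y) (theta d) Hole); [apply prov_rho_r |].
  destruct d; apply p_init; constructor.
Qed.

Section KStructure.

Variable k : str.
Hypothesis Hk : is_k k.

Lemma prov_weaken_k y d : prov L R S (y, d) -> prov L R S (scomp y k, d).
Proof.
  intro H. rewrite <- fill_ctx_right_of. apply p_kw; [exact Hk |].
  rewrite fill_ctx_right_of, scomp_eps_r. exact H.
Qed.

Lemma prov_contract_k y d :
  prov L R S (scomp (scomp y k) k, d) -> prov L R S (scomp y k, d).
Proof.
  intro H. rewrite <- fill_ctx_right_of. apply p_kc; [exact Hk |].
  rewrite fill_ctx_right_of. exact (p_ka2a _ _ _ Hole _ _ _ _ Hk H).
Qed.

Lemma prov_k_out_of_ctx u v z d :
  prov L R S (fill v (fill u (scomp z k)), d) ->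
  prov L R S (fill v (scomp (fill u z) k), d).
Proof.
  revert v. induction u as [|u IH y|y u IH]; intros v H; [exact H | |].
  - change (prov L R S (fill v (scomp (scomp (fill u z) (Some y)) k), d)).
    apply p_ke1, p_ka1a; try exact Hk.
    change (scomp (scomp k (fill u z)) (Some y))
      with (fill (CL Hole y) (scomp k (fill u z))).
    rewrite <- fill_comp. apply p_ke2; [exact Hk |]. apply IH. rewrite fill_comp. exact H.
  - change (prov L R S (fill v (scomp (scomp (Some y) (fill u z)) k), d)).
    apply p_ka2b; [exact Hk |].
    change (scomp (Some y) (scomp (fill u z) k))
      with (fill (CR y Hole) (scomp (fill u z) k)).
    rewrite <- fill_comp. apply IH. rewrite fill_comp. exact H.
Qed.

Lemma prov_absorb_k u z d :
  prov L R S (scomp (fill u (scomp z k)) k, d) -> prov L R S (scomp (fill u z) k, d).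
Proof.
  intro H. apply prov_contract_k.
  rewrite <- (fill_ctx_left_of k (scomp (fill u z) k)).
  apply prov_k_out_of_ctx. rewrite fill_ctx_left_of. exact H.
Qed.

Lemma prov_absorb_k_scomp x y d :
  prov L R S (scomp (scomp (scomp x k) (scomp y k)) k, d) ->
  prov L R S (scomp (scomp x y) k, d).
Proof.
  intro H. rewrite <- (fill_ctx_left_of y x). apply prov_absorb_k.
  rewrite fill_ctx_left_of, <- (fill_ctx_right_of (scomp x k) y).
  apply prov_absorb_k. rewrite fill_ctx_right_of. exact H.
Qed.

End KStructure.

Lemma prov_tau_fold_member ss s y d :
  In s ss -> prov L R S (scomp y (fm (tau s)), d) -> prov L R S (scomp y (tau_fold ss), d).
Proof.
  revert y. induction ss as [|s0 ss IH]; intros y Hin H; [destruct Hin |].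
  change (tau_fold (s0 :: ss)) with (scomp (fm (tau s0)) (tau_fold ss)).
  destruct Hin as [<- | Hin].
  - apply (p_ka2a _ _ _ Hole); [apply is_k_tau_fold |].
    apply prov_weaken_k; [apply is_k_tau_fold | exact H].
  - rewrite <- fill_scomp_around. apply p_kw; [apply is_k_tau |].
    rewrite fill_scomp_around. exact (IH y Hin H).
Qed.

Lemma prov_cut_tau_fold ss x d :
  (forall s, In s ss -> prov L R S (eps, Some (tau s))) ->
  prov L R S (scomp x (tau_fold ss), d) -> prov L R S (x, d).
Proof.
  revert x. induction ss as [|s ss IH]; intros x Htau H.
  - rewrite <- (scomp_eps_r x). exact H.
  - apply IH; [intros s' Hs'; apply Htau; right; exact Hs' |].
    change (tau_fold ss) with (scomp eps (tau_fold ss)).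
    rewrite <- fill_scomp_around.
    apply (p_cut _ _ _ eps (tau s)); [apply Htau; left; reflexivity |].
    rewrite fill_scomp_around. exact H.
Qed.

End Deduction.

Ltac prov_in_ctx rule :=
  rewrite scomp_fill_l; apply rule; try assumption; rewrite <- scomp_fill_l; assumption.

Lemma prov_append_k L R S S0 T :
  is_k T ->
  (forall s, S s -> prov L R S0 (scomp (fst s) T, snd s)) ->
  forall s, prov L R S s -> prov L R S0 (scomp (fst s) T, snd s).
Proof.
  intros HT HS s H. induction H; cbn [fst snd] in *.
  - apply HS; assumption.
  - destruct s. apply prov_weaken_k, p_init; assumption.
  - apply prov_absorb_k; [exact HT |]. rewrite scomp_fill_l.
    eapply p_cut; [exact IHprov1 |]. rewrite <- scomp_fill_l. exact IHprov2.
  - prov_in_ctx p_oneL.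
  - apply p_zeroR; assumption.
  - rewrite <- (fill_ctx_left_of (fm (LDiv a b)) x), <- fill_comp.
    apply prov_absorb_k; [exact HT |].
    rewrite fill_comp, fill_ctx_left_of, scomp_fill_l. apply p_ldivL; [assumption |].
    rewrite <- scomp_fill_l. assumption.
  - apply p_ldivR. apply (p_ka2a _ _ _ Hole); assumption.
  - rewrite <- (fill_ctx_right_of (fm (RDiv b a)) x), <- fill_comp.
    apply prov_absorb_k; [exact HT |].
    rewrite fill_comp, fill_ctx_right_of, scomp_fill_l. apply p_rdivL; [assumption |].
    rewrite <- scomp_fill_l. assumption.
  - apply p_rdivR. rewrite <- (fill_ctx_left_of (fm a) (scomp x T)).
    apply p_ke1; [exact HT |]. rewrite fill_ctx_left_of.
    apply (p_ka1b _ _ _ Hole); [exact HT |]. apply (p_ke2 _ _ _ Hole); assumption.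
  - prov_in_ctx p_prodL.
  - apply prov_absorb_k_scomp; [exact HT |].
    apply prov_weaken_k, p_prodR; assumption.
  - prov_in_ctx p_meetL1.
  - prov_in_ctx p_meetL2.
  - apply p_meetR; assumption.
  - prov_in_ctx p_joinL.
  - apply p_joinR1; assumption.
  - apply p_joinR2; assumption.
  - prov_in_ctx p_bangL.
  - apply p_bangR; [apply is_k_scomp | ]; assumption.
  - prov_in_ctx p_kw.
  - prov_in_ctx p_kc.
  - prov_in_ctx p_ke1.
  - prov_in_ctx p_ke2.
  - prov_in_ctx p_ka1a.
  - prov_in_ctx p_ka1b.
  - prov_in_ctx p_ka2a.
  - prov_in_ctx p_ka2b.
  - prov_in_ctx p_e.
  - prov_in_ctx p_c.
  - prov_in_ctx p_i.
  - apply p_o; assumption.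
Qed.

Theorem prov_deduction L R ss x d :
  prov L R (fun s => In s ss) (x, d) <->
  prov L R (fun _ => False) (scomp x (tau_fold ss), d).
Proof.
  split; intro H.
  - refine (prov_append_k L R _ _ _ (is_k_tau_fold ss) _ (x, d) H).
    intros [y d'] Hin.
    exact (prov_tau_fold_member L R _ _ _ _ _ Hin (prov_tau_discharge L R _ y d')).
  - apply (prov_cut_tau_fold L R _ ss).
    + intros [y d'] Hin. apply prov_tau, p_hyp, Hin.
    + apply (prov_mono L R (fun _ => False)); [contradiction | exact H].
Qed.

Theorem mainTheorem18 :
  forall (R : srule -> bool) (ss : list sequent) (x : str) (d : option formula),
    ss <> nil ->
    (prov NACCLLminus R (fun s => In s ss) (x, d) <->
     prov NACCLLminus R (fun _ => False) (scomp x (tau_fold ss), d)) /\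
    (prov NACCLLfull R (fun s => In s ss) (x, d) <->
     prov NACCLLfull R (fun _ => False) (scomp x (tau_fold ss), d)).
Proof. intros R ss x d _. split; apply prov_deduction. Qed.
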